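(* Let $\alpha\in(0,1]$ and let $\mathcal{N}[\varphi]=\mathbb{E}[\varphi(\xi)]=\sup_{\mu\in\Theta}\mu[\varphi]$ be a sublinear expectation on $C_{b,Lip}(\mathbb{R})$ satisfying condition (H) below, with $\mathbb{E}[|\xi|^{1+\alpha}]<\infty$. Let $p_\xi(a)=\mathbb{E}[a\xi]$, $a\in\mathbb{R}$. Then for every $\phi\in C_b^{1,\alpha}(\mathbb{R})$ and every $\mu\in\Theta_\phi$, $$\big|E_\mu[\xi\phi'(\xi)-p_\xi(\phi'(\xi))]\big|\le 4[\phi']_\alpha\,\mathbb{E}[|\xi|^{1+\alpha}].$$
   Context: A sublinear expectation on $C_{b,Lip}(\mathbb{R})$ (bounded Lipschitz functions) is a monotone, positively homogeneous, constant-preserving, subadditive functional continuous from above along sequences decreasing to $0$; it is represented as $\mathcal{N}[\varphi]=\sup_{\mu\in\Theta}\mu[\varphi]$ for a weakly compact set $\Theta$ of Borel probability measures on $\mathbb{R}$, and is extended to other measurable functions by the same supremum. Notation: $\xi(x)=x$, $\mathbb{E}[\varphi(\xi)]=\mathcal{N}[\varphi]$, $E_\mu[\varphi(\xi)]=\int\varphi\,d\mu$, $\Theta_\phi=\{\mu\in\Theta:E_\mu[\phi(\xi)]=\mathbb{E}[\phi(\xi)]\}$. Condition (H): $\lim_{N\to\infty}\mathcal{N}[|x|1_{[|x|>N]}]=0$. $C_b^{1,\alpha}(\mathbb{R})$ is the set of bounded $C^1$ functions with bounded derivative whose derivative is $\alpha$-Hölder, and $[\phi']_\alpha=\sup_{x\ne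 y}|\phi'(x)-\phi'(y)|/|x-y|^\alpha$. *)

From HB Require Import structures.
From mathcomp Require Import all_boot all_order all_algebra.
From mathcomp Require Import all_classical all_reals all_analysis.
Set Implicit Arguments. Unset Strict Implicit. Unset Printing Implicit Defensive.
Import Order.TTheory GRing.Theory Num.Theory.
Import numFieldNormedType.Exports.
Local Open Scope classical_set_scope.
Local Open Scope ring_scope.

Section defs.
Context (R : realType).

Definition weak_cvg (u : nat -> probability R R) (mu : probability R R) : Prop :=
  forall f : R -> R, continuous f -> (exists M : R, forall x, `|f x| <= M) ->
    (fun n => (\int[u n]_x (f x)%:E)%E) @ \oo --> (\int[mu]_x (f x)%:E)%E.

(* Weak compactness (= sequential weak compactness, the weak topology on
   probability measures on R being metrizable). *)
Definition weakly_compact (Theta : set (probability R R)) : Prop :=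
  forall u : nat -> probability R R, (forall n, Theta (u n)) ->
    exists (s : nat -> nat) (mu : probability R R),
      {homo s : m n / (m < n)%N >-> (m < n)%N} /\ Theta mu /\ weak_cvg (u \o s) mu.

(* The sublinear expectation E[f(xi)] = sup_{mu in Theta} mu[f], xi(x) = x. *)
Definition sublin (Theta : set (probability R R)) (f : R -> R) : \bar R :=
  ereal_sup [set (\int[mu]_x (f x)%:E)%E | mu in Theta].

Definition condH (Theta : set (probability R R)) : Prop :=
  (fun N : R => sublin Theta (fun x => `|x| * (\1_[set y | N < `|y|] x : R)))
    @ +oo --> 0%E.

(* p_xi(a) = E[a xi] (finite under the moment assumption) *)
Definition p_xi (Theta : set (probability R R)) (a : R) : R :=
  fine (sublin Theta (fun x => a * x)).

Definition Theta_of (Theta : set (probability R R)) (phi : R -> R) : set (probability R R) :=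
  [set mu | Theta mu /\ (\int[mu]_x (phi x)%:E)%E = sublin Theta phi].

Definition Cb1alpha (alpha : R) (phi : R -> R) : Prop :=
  (exists M : R, forall x, `|phi x| <= M) /\
  (forall x, derivable phi x 1) /\
  continuous (derive1 phi) /\
  (exists M : R, forall x, `|(derive1 phi) x| <= M) /\
  (exists C : R, forall x y, `|(derive1 phi) x - (derive1 phi) y| <= C * `|x - y| `^ alpha).

Definition holder_semi (alpha : R) (g : R -> R) : \bar R :=
  ereal_sup [set r | exists x y : R, x != y /\ r = (`|g x - g y| / `|x - y| `^ alpha)%:E].
End defs.

(* Write m(nu) for the mean of nu, so that p_xi(a) = sup_{nu in Theta} a m(nu).
   Fix x and a = phi'(x).  The Hoelder bound on phi' gives the Taylor estimate
   |phi(y) - phi(x) - a (y - x)| <= 2 [phi']_alpha (|x|^(1+alpha) + |y|^(1+alpha)).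
   Integrating it against any nu in Theta, and using E_nu[phi] <= E_mu[phi] since
   mu is in Theta_phi, bounds p_xi(a) from above; integrating it against mu bounds
   a m(mu) <= p_xi(a) from below.  Hence the Stein deviation
   x phi'(x) - p_xi(phi'(x)) - (phi(x) - E_mu[phi]) is bounded pointwise by
   2 [phi']_alpha (|x|^(1+alpha) + E[|xi|^(1+alpha)]), and integrating against mu,
   where phi - E_mu[phi] has mean zero, yields the constant 4. *)

From HB Require Import structures.
From mathcomp Require Import all_boot all_order all_algebra.
From mathcomp Require Import all_classical all_reals all_analysis.
From mathcomp Require Import ring lra measurable_realfun.
Import Order.TTheory GRing.Theory Num.Theory.
Import numFieldNormedType.Exports.
Local Open Scope classical_set_scope.
Local Open Scope ring_scope.

Section powR_inequalities.
Context {R : realType}.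
Implicit Types a b p : R.

Lemma powR_subadditive a b p : 0 <= a -> 0 <= b -> 0 < p <= 1 ->
  (a + b) `^ p <= a `^ p + b `^ p.
Proof.
move=> a0 b0 /andP[p0 p1].
have [ab0|ab0] := eqVneq (a + b) 0.
  have [-> ->] : a = 0 /\ b = 0 by split; lra.
  by rewrite addr0 powR0 ?gt_eqF // addr0.
have abp : 0 < a + b by rewrite lt0r ab0 addr_ge0.
have le_frac t : 0 <= t <= a + b -> t / (a + b) <= (t / (a + b)) `^ p.
  move=> /andP[t0 tab]; have [->|t_neq0] := eqVneq t 0; first by rewrite mul0r powR0 ?gt_eqF.
  apply: ger1_powR => //; apply/andP; split; last by rewrite ler_pdivrMr // mul1r.
  by rewrite divr_gt0 // lt0r t_neq0.
have split_frac t : 0 <= t -> t `^ p = (a + b) `^ p * (t / (a + b)) `^ p.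
  by move=> t0; rewrite -powRM ?divr_ge0 ?(ltW abp) // mulrC divfK ?gt_eqF.
rewrite (split_frac a) // (split_frac b) // -mulrDr -[leLHS]mulr1 ler_pM2l ?powR_gt0 //.
rewrite -[leLHS](divff ab0) mulrDl.
by apply: lerD; apply: le_frac; apply/andP; split => //; lra.
Qed.

Lemma powR1D a p : 0 <= a -> 0 < p -> a `^ (1 + p) = a * a `^ p.
Proof.
move=> a0 p0; rewrite powRD ?powRr1 //.
by apply/implyP => /eqP; lra.
Qed.

Lemma powR1D_add_le a b p : 0 <= a -> 0 <= b -> 0 < p <= 1 ->
  (a + b) `^ (1 + p) <= 2 * (a `^ (1 + p) + b `^ (1 + p)).
Proof.
move=> a0 b0 p01; have /andP[p0 _] := p01.
rewrite !powR1D ?addr_ge0 //.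
(* Subadditivity bounds the left side by (a + b)(a^p + b^p), and the
   rearrangement inequality bounds the cross terms a b^p + b a^p. *)
have sub := @powR_subadditive a b p a0 b0 p01.
have cheb : 0 <= (a - b) * (a `^ p - b `^ p).
  have [ab|ba] := leP a b.
    have abp : a `^ p <= b `^ p by apply: ge0_ler_powR; rewrite ?nnegrE // ltW.
    by apply: mulr_le0; lra.
  have bap : b `^ p <= a `^ p by apply: ge0_ler_powR; rewrite ?nnegrE // ltW.
  by apply: mulr_ge0; lra.
by have := ler_wpM2l (addr_ge0 a0 b0) sub; nra.
Qed.

Lemma powR1D_dist_le (x y p : R) : 0 < p <= 1 ->
  `|y - x| `^ (1 + p) <= 2 * (`|x| `^ (1 + p) + `|y| `^ (1 + p)).
Proof.
move=> p01; have /andP[p0 _] := p01.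
apply: le_trans (@powR1D_add_le _ _ p (normr_ge0 x) (normr_ge0 y) p01).
apply: ge0_ler_powR; rewrite ?nnegrE ?addr_ge0 //; first lra.
by rewrite [`|x| + _]addrC; apply: ler_normB.
Qed.

End powR_inequalities.

Section holder_taylor.
Context {R : realType} (f : R -> R).
Hypothesis f_derivable : forall x, derivable f x 1.

Lemma MVT_derive1 a b : a < b -> exists2 c, a < c < b & f b - f a = derive1 f c * (b - a).
Proof.
move=> ab; have f_is_derive (z : R) : is_derive z 1 f (derive1 f z).
  by rewrite derive1E; exact: derivableP.
have [c cab ->] := MVT ab (fun z _ => f_is_derive z)
  (derivable_within_continuous (fun z _ => f_derivable z)).
by exists c => //; rewrite in_itv in cab.
Qed.

Lemma MVT_between x y : exists2 c, `|c - x| <= `|y - x| & f y - f x = derive1 f c * (y - x).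
Proof.
have [xy|yx|<-] := ltgtP x y.
- have [c /andP[xc cy] ->] := @MVT_derive1 x y xy.
  by exists c => //; rewrite !ger0_norm; lra.
- have [c /andP[yc cx] e] := @MVT_derive1 y x yx.
  exists c; first by rewrite !ler0_norm; lra.
  by rewrite -opprB e -mulrN opprB.
- by exists x; rewrite ?subrr ?mulr0.
Qed.

Lemma taylor_holder_le L p : 0 <= L -> 0 < p ->
  (forall x y, `|derive1 f x - derive1 f y| <= L * `|x - y| `^ p) ->
  forall x y, `|f y - f x - derive1 f x * (y - x)| <= L * `|y - x| `^ (1 + p).
Proof.
move=> L0 p0 holder x y; have [c cx ->] := MVT_between x y.
rewrite -mulrBl normrM powR1D // mulrCA mulrC ler_wpM2l //.
apply: le_trans (holder c x) _; rewrite ler_wpM2l //.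
by apply: ge0_ler_powR; rewrite ?nnegrE // ltW.
Qed.

End holder_taylor.

Section holder_seminorm.
Context {R : realType} {alpha : R} {g : R -> R}.

Lemma holder_semi_ge0 : (0 <= holder_semi alpha g)%E.
Proof.
apply: (@le_trans _ _ (`|g 0 - g 1| / `|0 - 1| `^ alpha)%:E).
  by rewrite lee_fin divr_ge0 // powR_ge0.
by apply: ereal_sup_ubound; exists 0, 1; rewrite eq_sym oner_neq0.
Qed.

Lemma holder_semi_le C : (forall x y, `|g x - g y| <= C * `|x - y| `^ alpha) ->
  (holder_semi alpha g <= C%:E)%E.
Proof.
move=> gC; apply: ge_ereal_sup => _ [x [y [xy ->]]].
by rewrite lee_fin ler_pdivrMr ?powR_gt0 ?normr_gt0 ?subr_eq0.
Qed.

Lemma ler_holder_semi : holder_semi alpha g \is a fin_num ->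
  forall x y, `|g x - g y| <= fine (holder_semi alpha g) * `|x - y| `^ alpha.
Proof.
move=> g_fin x y; have [->|xy] := eqVneq x y.
  by rewrite subrr normr0 mulr_ge0 ?powR_ge0 ?fine_ge0 ?holder_semi_ge0.
rewrite -ler_pdivrMr ?powR_gt0 ?normr_gt0 ?subr_eq0 // -lee_fin fineK //.
by apply: ereal_sup_ubound; exists x, y.
Qed.

End holder_seminorm.

Section measure_Rintegral.
Context {d} {T : measurableType d} {R : realType}.

Lemma le_normr_Rintegral_dominated {mu : {measure set T -> \bar R}} {f h : T -> R} :
  mu.-integrable setT (EFin \o f) -> mu.-integrable setT (EFin \o h) ->
  (forall x, `|f x| <= h x) -> `|\int[mu]_x f x| <= \int[mu]_x h x.
Proof.
move=> f_int h_int fh; apply: le_trans (le_normr_Rintegral measurableT f_int) _.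
by apply: le_Rintegral => //; exact: integrable_norm.
Qed.

Lemma integrableZl_EFin {mu : {measure set T -> \bar R}} (k : R) {f : T -> R} :
  mu.-integrable setT (EFin \o f) -> mu.-integrable setT (EFin \o (fun x => k * f x)).
Proof. by move=> f_int; apply: eq_integrable (integrableZl measurableT k f_int). Qed.

Lemma integrableD_EFin {mu : {measure set T -> \bar R}} {f g : T -> R} :
  mu.-integrable setT (EFin \o f) -> mu.-integrable setT (EFin \o g) ->
  mu.-integrable setT (EFin \o (fun x => f x + g x)).
Proof. by move=> f_int g_int; apply: eq_integrable (integrableD measurableT f_int g_int). Qed.

Lemma integrable_dominated {mu : {finite_measure set T -> \bar R}} (w f : T -> R) A B :
  mu.-integrable setT (EFin \o w) -> measurable_fun setT f ->
  (forall x, `|f x| <= A + B * w x) -> mu.-integrable setT (EFin \o f).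
Proof.
move=> w_int f_meas fAB.
have AB_int := integrableD_EFin (finite_measure_integrable_cst mu A measurableT)
  (integrableZl_EFin B w_int).
apply: le_integrable AB_int => //; first exact/measurable_EFinP.
by move=> x _ /=; rewrite lee_fin (le_trans (fAB x)) ?ler_norm.
Qed.

Lemma Rintegral_cst_probability (P : probability T R) (K : R) : \int[P]_x K = K.
Proof.
rewrite Rintegral_cst // (_ : fine _ = 1) ?mulr1 //.
exact: (congr1 fine (probability_setT P)).
Qed.

Lemma Rintegral_cstD (P : probability T R) (K : R) (f : T -> R) :
  P.-integrable setT (EFin \o f) -> \int[P]_x (K + f x) = K + \int[P]_x f x.
Proof.
move=> f_int; rewrite RintegralD ?Rintegral_cst_probability //.
exact: finite_measure_integrable_cst.
Qed.

End measure_Rintegral.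

Lemma sublin_ge {R : realType} {Theta : set (probability R R)} (f : R -> R) {nu} :
  Theta nu -> (\int[nu]_x (f x)%:E <= sublin Theta f)%E.
Proof. by move=> Tnu; apply: ereal_sup_ubound; exists nu. Qed.

Section sublinear_expectation_with_moment.
Context {R : realType} {alpha : R} {Theta : set (probability R R)}.
Hypothesis alpha_ge0 : 0 <= alpha.
Hypothesis Theta_neq0 : Theta !=set0.
Let pw (x : R) := `|x| `^ (1 + alpha).
Hypothesis moment_lty : (sublin Theta pw < +oo)%E.
Let Epw := fine (sublin Theta pw).

Lemma measurable_pw : measurable_fun setT pw.
Proof. exact: measurableT_comp (measurable_powR _) (@normr_measurable R setT). Qed.

Lemma normr_le_pw x : `|x| <= 1 + pw x.
Proof.
have [x1|x1] := leP `|x| 1; first by have : 0 <= pw x := powR_ge0 _ _; lra.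
have : `|x| <= pw x by apply: le1r_powR; rewrite ?lerDl // ltW.
lra.
Qed.

Lemma integrable_pw {nu} : Theta nu -> nu.-integrable setT (EFin \o pw).
Proof.
move=> Tnu; apply/integrableP; split; first by apply/measurable_EFinP; exact: measurable_pw.
rewrite (eq_integral (fun x => (pw x)%:E)) => [|x _]; last by rewrite /= ger0_norm // powR_ge0.
exact: le_lt_trans (sublin_ge pw Tnu) moment_lty.
Qed.

Lemma sublin_pw_fin_num : sublin Theta pw \is a fin_num.
Proof.
have [nu Tnu] := Theta_neq0; rewrite ge0_fin_numE ?moment_lty //.
apply: le_trans (sublin_ge pw Tnu).
by apply: integral_ge0 => x _; rewrite lee_fin powR_ge0.
Qed.

Lemma Rintegral_pw_le {nu} : Theta nu -> \int[nu]_x pw x <= Epw.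
Proof.
move=> Tnu; rewrite fine_le ?sublin_pw_fin_num ?sublin_ge //.
by apply: integrable_fin_num => //; exact: integrable_pw.
Qed.

Lemma Epw_ge0 : 0 <= Epw.
Proof.
have [nu Tnu] := Theta_neq0; apply: le_trans (Rintegral_pw_le Tnu).
by apply: Rintegral_ge0 => x _; exact: powR_ge0.
Qed.

Lemma integrable_Theta {nu} (f : R -> R) A B : Theta nu -> measurable_fun setT f ->
  (forall x, `|f x| <= A + B * pw x) -> nu.-integrable setT (EFin \o f).
Proof. by move=> Tnu; apply: integrable_dominated (integrable_pw Tnu). Qed.

Lemma integrable_id {nu} : Theta nu -> nu.-integrable setT (EFin \o id).
Proof.
move=> Tnu; apply: (@integrable_Theta _ _ 1 1) => // x.
by rewrite mul1r normr_le_pw.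
Qed.

Lemma integrable_linear {nu} a : Theta nu -> nu.-integrable setT (EFin \o *%R a).
Proof. by move=> Tnu; apply: integrableZl_EFin (integrable_id Tnu). Qed.

Lemma integrable_affine {nu} K a : Theta nu ->
  nu.-integrable setT (EFin \o (fun x => K + a * x)).
Proof.
move=> Tnu; apply: integrableD_EFin (integrable_linear a Tnu).
exact: finite_measure_integrable_cst.
Qed.

Definition mean (nu : probability R R) := \int[nu]_x x.

Lemma Rintegral_affine {nu} K a : Theta nu ->
  \int[nu]_x (K + a * x) = K + a * mean nu.
Proof.
move=> Tnu; rewrite Rintegral_cstD ?RintegralZl //.
- exact: integrable_id.
- exact: integrable_linear.
Qed.

Lemma le_normr_Rintegral_pw {nu} (f : R -> R) K b : Theta nu -> 0 <= b ->
  measurable_fun setT f -> (forall x, `|f x| <= K + b * pw x) ->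
  `|\int[nu]_x f x| <= K + b * Epw.
Proof.
move=> Tnu b0 f_meas f_le; have pw_int := integrable_pw Tnu.
have bpw_int := integrableZl_EFin b pw_int.
have h_int := integrableD_EFin (finite_measure_integrable_cst nu K measurableT) bpw_int.
apply: le_trans (le_normr_Rintegral_dominated (integrable_Theta f K b Tnu f_meas f_le) h_int f_le) _.
rewrite Rintegral_cstD ?RintegralZl //.
by apply: lerD => //; exact: ler_wpM2l (Rintegral_pw_le Tnu).
Qed.

Lemma normr_mean_le {nu} : Theta nu -> `|mean nu| <= 1 + Epw.
Proof.
move=> Tnu; rewrite -[Epw]mul1r.
by apply: le_normr_Rintegral_pw => // x; rewrite mul1r normr_le_pw.
Qed.

Lemma integral_linear {nu} a : Theta nu ->
  (\int[nu]_x ((a * x)%R)%:E = ((a * mean nu)%R)%:E)%E.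
Proof.
move=> Tnu; rewrite -RintegralZl ?fineK //; last exact: integrable_id.
by apply: integrable_fin_num => //; exact: integrable_linear.
Qed.

Lemma sublin_linear_ge {nu} a : Theta nu ->
  ((a * mean nu)%:E <= sublin Theta (fun x => (a * x)%R))%E.
Proof. by move=> Tnu; rewrite -integral_linear //; exact: sublin_ge. Qed.

Lemma sublin_linear_le a r : (forall nu, Theta nu -> a * mean nu <= r) ->
  (sublin Theta (fun x => (a * x)%R) <= r%:E)%E.
Proof.
move=> ar; apply: ge_ereal_sup => _ [nu Tnu <-].
by rewrite integral_linear // lee_fin ar.
Qed.

Lemma sublin_linear_fin_num a : sublin Theta (fun x => a * x) \is a fin_num.
Proof.
have [nu Tnu] := Theta_neq0; rewrite fin_numE; apply/andP; split.
  by rewrite gt_eqF // (lt_le_trans (ltNyr _) (sublin_linear_ge a Tnu)).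
rewrite lt_eqF // (@le_lt_trans _ _ (`|a| * (1 + Epw))%:E) ?ltry //.
apply: sublin_linear_le => mu Tmu; apply: le_trans (ler_norm _) _.
by rewrite normrM ler_wpM2l ?normr_mean_le.
Qed.

Lemma p_xi_ge {nu} a : Theta nu -> a * mean nu <= p_xi Theta a.
Proof.
by move=> Tnu; rewrite -lee_fin fineK ?sublin_linear_fin_num ?sublin_linear_ge.
Qed.

Lemma p_xi_le a r : (forall nu, Theta nu -> a * mean nu <= r) -> p_xi Theta a <= r.
Proof.
by move=> ar; rewrite -lee_fin fineK ?sublin_linear_fin_num ?sublin_linear_le.
Qed.

Lemma p_xi_lipschitz a b : p_xi Theta a <= p_xi Theta b + `|a - b| * (1 + Epw).
Proof.
apply: p_xi_le => nu Tnu; have := p_xi_ge b Tnu.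
have : (a - b) * mean nu <= `|a - b| * (1 + Epw).
  by apply: le_trans (ler_norm _) _; rewrite normrM ler_wpM2l ?normr_mean_le.
lra.
Qed.

Lemma continuous_p_xi : continuous (p_xi Theta).
Proof.
have K0 : 0 < 1 + Epw by have := Epw_ge0; lra.
move=> a; apply/cvgrPdist_le => e e0; apply/nbhs_normP; exists (e / (1 + Epw)).
  by rewrite /= divr_gt0.
move=> b /= ab; have := p_xi_lipschitz a b; have := p_xi_lipschitz b a.
have : `|a - b| * (1 + Epw) <= e by rewrite -ler_pdivlMr // ltW.
by rewrite distrC ler_norml; lra.
Qed.

Section stein_estimate.
Hypothesis alpha01 : 0 < alpha <= 1.
Variable phi : R -> R.
Hypothesis phi_derivable : forall x, derivable phi x 1.
Hypothesis phi'_continuous : continuous (derive1 phi).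
Variable M : R.
Hypothesis phi_le : forall x, `|phi x| <= M.
Variable L : R.
Hypothesis L_ge0 : 0 <= L.
Hypothesis phi'_holder : forall x y, `|derive1 phi x - derive1 phi y| <= L * `|x - y| `^ alpha.
Variable mu : probability R R.
Hypothesis mu_max : Theta_of Theta phi mu.
Let c := \int[mu]_x phi x.

Lemma measurable_phi : measurable_fun setT phi.
Proof.
apply: continuous_measurable_fun => x.
exact: differentiable_continuous ((derivable1_diffP phi x).1 (phi_derivable x)).
Qed.

Lemma integrable_phi {nu} : Theta nu -> nu.-integrable setT (EFin \o phi).
Proof.
move=> Tnu; apply: (integrable_Theta phi M 0 Tnu measurable_phi) => x.
by rewrite mul0r addr0.
Qed.

Lemma Rintegral_phi_le {nu} : Theta nu -> \int[nu]_x phi x <= c.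
Proof.
move=> Tnu; rewrite fine_le //; first by apply: integrable_fin_num => //; exact: integrable_phi.
  by apply: integrable_fin_num => //; apply: integrable_phi; case: mu_max.
by case: mu_max => _ ->; exact: sublin_ge.
Qed.

Lemma taylor_remainder_le x y :
  `|phi y - phi x - derive1 phi x * (y - x)| <= 2 * L * pw x + 2 * L * pw y.
Proof.
have [alpha_gt0 _] := andP alpha01.
apply: le_trans (@taylor_holder_le _ phi phi_derivable L alpha L_ge0 alpha_gt0 phi'_holder x y) _.
by rewrite -mulrDr (mulrC 2) -mulrA ler_wpM2l // powR1D_dist_le.
Qed.

Lemma Rintegral_taylor_remainder_le {nu} x : Theta nu ->
  `|\int[nu]_y phi y - phi x - derive1 phi x * (mean nu - x)| <= 2 * L * pw x + 2 * L * Epw.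
Proof.
move=> Tnu; set a := derive1 phi x.
have -> : \int[nu]_y phi y - phi x - a * (mean nu - x) =
    \int[nu]_y (phi y - ((phi x - a * x) + a * y)).
  by rewrite RintegralB ?Rintegral_affine ?integrable_phi ?integrable_affine //; ring.
apply: le_normr_Rintegral_pw => //; first exact: mulr_ge0.
  apply: measurable_funB; first exact: measurable_phi.
  by apply: measurable_funD => //; exact: mulrl_measurable.
move=> y; have := taylor_remainder_le x y; rewrite -/a.
by have -> : phi y - (phi x - a * x + a * y) = phi y - phi x - a * (y - x) by ring.
Qed.

Lemma p_xi_le_tangent x : p_xi Theta (derive1 phi x) <=
  derive1 phi x * x + c - phi x + (2 * L * pw x + 2 * L * Epw).
Proof.
apply: p_xi_le => nu Tnu; have := Rintegral_taylor_remainder_le x Tnu.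
rewrite ler_norml => /andP[+ _]; have := Rintegral_phi_le Tnu; lra.
Qed.

Lemma p_xi_ge_tangent x :
  derive1 phi x * x + c - phi x - (2 * L * pw x + 2 * L * Epw) <= p_xi Theta (derive1 phi x).
Proof.
have Tmu : Theta mu by case: mu_max.
have := p_xi_ge (derive1 phi x) Tmu; have := Rintegral_taylor_remainder_le x Tmu.
rewrite ler_norml => /andP[_ +]; rewrite -/c; lra.
Qed.

Lemma stein_deviation_le x :
  `|x * derive1 phi x - p_xi Theta (derive1 phi x) - (phi x - c)| <=
    2 * L * Epw + 2 * L * pw x.
Proof.
have := p_xi_le_tangent x; have := p_xi_ge_tangent x.
by rewrite ler_norml (mulrC x); lra.
Qed.

Let stein x := x * derive1 phi x - p_xi Theta (derive1 phi x).

Lemma measurable_stein : measurable_fun setT stein.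
Proof.
apply: measurable_funB; first by apply: measurable_funM => //; exact: continuous_measurable_fun.
apply: continuous_measurable_fun => x.
exact: continuous_comp (phi'_continuous x) (continuous_p_xi _).
Qed.

Lemma abse_integral_stein_le : (`|\int[mu]_x (stein x)%:E| <= (4 * L * Epw)%:E)%E.
Proof.
have Tmu : Theta mu by case: mu_max.
have phic_meas : measurable_fun setT (fun x => phi x - c).
  by apply: measurable_funB => //; exact: measurable_phi.
have dev_meas : measurable_fun setT (fun x => stein x - (phi x - c)).
  by apply: measurable_funB => //; exact: measurable_stein.
have stein_int : mu.-integrable setT (EFin \o stein).
  apply: (integrable_Theta stein (2 * L * Epw + (M + `|c|)) (2 * L) Tmu measurable_stein).
  move=> x; have := stein_deviation_le x.
  have : `|phi x - c| <= M + `|c| := le_trans (ler_normB _ _) (lerD (phi_le x) (lexx _)).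
  have : `|stein x| <= `|stein x - (phi x - c)| + `|phi x - c|.
    by rewrite -[X in `|X| <= _](subrK (phi x - c)) ler_normD.
  lra.
have phic_int : mu.-integrable setT (EFin \o (fun x => phi x - c)).
  apply: (integrable_Theta _ (M + `|c|) 0 Tmu phic_meas) => x.
  by rewrite mul0r addr0 (le_trans (ler_normB _ _) (lerD (phi_le x) (lexx _))).
have phic0 : \int[mu]_x (phi x - c) = 0.
  rewrite RintegralB ?Rintegral_cst_probability ?subrr //; first exact: integrable_phi.
  exact: finite_measure_integrable_cst.
have -> : (\int[mu]_x (stein x)%:E)%E = (\int[mu]_x stein x)%:E.
  by rewrite fineK //; exact: integrable_fin_num.
rewrite abse_EFin lee_fin -[\int[mu]_x stein x]subr0 -phic0 -RintegralB //.
have -> : 4 * L * Epw = 2 * L * Epw + 2 * L * Epw by ring.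
apply: le_normr_Rintegral_pw => //; first exact: mulr_ge0.
exact: stein_deviation_le.
Qed.

End stein_estimate.

End sublinear_expectation_with_moment.

Theorem lemma3p2 (R : realType) (alpha : R) (Theta : set (probability R R)) :
  0 < alpha <= 1 ->
  Theta !=set0 ->
  weakly_compact Theta ->
  condH Theta ->
  (sublin Theta (fun x => (`|x| `^ (1 + alpha))%R) < +oo)%E ->
  forall phi : R -> R, Cb1alpha alpha phi ->
  forall mu : probability R R, Theta_of Theta phi mu ->
  (`| \int[mu]_x ((x * (derive1 phi) x - p_xi Theta ((derive1 phi) x))%R)%:E |
     <= (4%:R)%:E * holder_semi alpha (derive1 phi) * sublin Theta (fun x => (`|x| `^ (1 + alpha))%R))%E.
Proof.
(* Weak compactness and (H) only serve to make Theta_phi nonempty; here mu is given. *)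
move=> alpha01 Theta_neq0 _ _ moment_lty phi.
move=> [[M phi_le] [phi_derivable [phi'_continuous [_ [C phi'_holder]]]]] mu mu_max.
have holder_fin : holder_semi alpha (derive1 phi) \is a fin_num.
  rewrite ge0_fin_numE ?holder_semi_ge0 //.
  exact: le_lt_trans (holder_semi_le C phi'_holder) (ltry _).
rewrite -(fineK holder_fin) -(fineK (sublin_pw_fin_num Theta_neq0 moment_lty)) -!EFinM.
apply: abse_integral_stein_le => //.
- by case/andP: alpha01 => /ltW.
- by rewrite fine_ge0 ?holder_semi_ge0.
- exact: ler_holder_semi.
Qed.
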